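(* Assume Evidential Independence. Then for every evidence partition $\mathcal{E}$ (and choice set $\mathcal{S}$ with a unique post-learning optimal action in each state), $\mathrm{Val}_{General}(\mathcal{E})\le \mathrm{Val}_{Good}(\mathcal{E})$.
   Context: Standing setup: $\Omega$ is a finite set of states; $p$ is a probability function on $\Omega$; $u:\mathscr{O}\to\mathbb{R}$ a utility function on outcomes; actions are functions $f:\Omega\to\mathscr{O}$; for a probability $q$, $\mathbb{E}_q(f)=\sum_{\omega} q(\{\omega\})u(f(\omega))$. $\mathcal{S}$ is a finite choice set of actions; $\mathcal{E}$ is a partition of $\Omega$ with $p(E)>0$ for all $E\in\mathcal{E}$, and $p(\cdot\mid E)$ is ratio conditional probability. An update rule assigns to each $E\in\mathcal{E}$ a map $\mathcal{P}_E:E\to\Delta(\Omega)$ (probability functions on $\Omega$) with $\mathcal{P}_E(\omega)(E)=1$; $\mathcal{P}_{\mathcal{E}}(\omega)=\mathcal{P}_E(\omega)$ for $\omega\in E$. Standing assumption: for each $\omega$ there is a unique $f^*_\omega\in\mathcal{S}$ maximizing $\mathbb{E}_{\mathcal{P}_{\mathcal{E}}(\omega)}(\cdot)$ over $\mathcal{S}$. Definitions: $\mathrm{Val}_{Good}(\mathcal{E})=\sum_{E\in\mathcal{E}}p(E)\max_{f\in\mathcal{S}}\mathbb{E}_{p(\cdot\mid E)}(f)-\max_{f\in\mathcal{S}}\mathbb{E}_p(f)$; $\mathrm{Val}_{General}(\mathcal{E})=\sum_{\omega\in\Omega}p(\{\omega\})u(f^*_\omega(\omega))-\max_{f\in\mathcal{S}}\mathbb{E}_p(f)$.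 Evidential Independence: for every $E\in\mathcal{E}$, every $f\in\mathcal{S}$ and every $g\in\mathcal{S}$ with $p(C_g)>0$ where $C_g=\{\omega\in E: f^*_\omega=g\}$, one has $\mathbb{E}_{p(\cdot\mid C_g)}(f)=\mathbb{E}_{p(\cdot\mid E)}(f)$. *)

From mathcomp Require Import all_boot all_order all_algebra.
From mathcomp Require Import boolp.
From Stdlib Require List.
Set Implicit Arguments. Unset Strict Implicit. Unset Printing Implicit Defensive.
Import Order.TTheory GRing.Theory Num.Theory.
Local Open Scope ring_scope.

Section Defs.
Variables (R : realFieldType) (Omega : finType) (O : Type) (u : O -> R).

Definition is_prob (q : Omega -> R) : Prop :=
  (forall w, 0 <= q w) /\ \sum_w q w = 1.

Definition prob_of (q : Omega -> R) (A : {set Omega}) : R := \sum_(w in A) q w.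

Definition condp (q : Omega -> R) (A : {set Omega}) (w : Omega) : R :=
  if w \in A then q w / prob_of q A else 0.

Definition expect (q : Omega -> R) (f : Omega -> O) : R :=
  \sum_w q w * u (f w).

(* max_{f in S} E_q(f) (S is assumed nonempty where used; 0 for empty S) *)
Definition maxS (S : seq (Omega -> O)) (q : Omega -> R) : R :=
  match S with
  | [::] => 0
  | f :: s => \big[Num.max/expect q f]_(g <- s) expect q g
  end.

Definition Val_Good (S : seq (Omega -> O)) (p : Omega -> R)
  (P : {set {set Omega}}) : R :=
  \sum_(E in P) prob_of p E * maxS S (condp p E) - maxS S p.

Definition Val_General (S : seq (Omega -> O)) (p : Omega -> R)
  (fstar : Omega -> (Omega -> O)) : R :=
  \sum_w p w * u (fstar w w) - maxS S p.

Definition Cset (fstar : Omega -> (Omega -> O)) (E : {set Omega})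
  (g : Omega -> O) : {set Omega} :=
  [set w in E | `[< fstar w = g >] ].

Definition EvidentialIndependence (S : seq (Omega -> O)) (p : Omega -> R)
  (P : {set {set Omega}}) (fstar : Omega -> (Omega -> O)) : Prop :=
  forall E, E \in P -> forall f g, List.In f S -> List.In g S ->
    0 < prob_of p (Cset fstar E g) ->
    expect (condp p (Cset fstar E g)) f = expect (condp p E) f.

End Defs.

From mathcomp Require Import all_boot all_order all_algebra.
From mathcomp Require Import boolp.
From mathcomp Require Import ring.
From Stdlib Require List.
Set Implicit Arguments. Unset Strict Implicit. Unset Printing Implicit Defensive.
Import Order.TTheory GRing.Theory Num.Theory.
Local Open Scope ring_scope.

(* Fix a cell E of the evidence partition and, for w in E, let C(w) be the set
   of states of E where the updated optimal action coincides with f*_w.  The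
   sets C(w) partition E, and f*_v = f*_w on C(w), so averaging u(f*_w(w)) over
   the class of w gives (class_average, expect_condp)
       sum_{w in E} p(w) u(f*_w(w)) = sum_{w in E} p(w) E_{p(.|C(w))}(f*_w).
   Evidential independence replaces p(.|C(w)) by p(.|E), and each
   E_{p(.|E)}(f*_w) is at most max_{f in S} E_{p(.|E)}(f) (maxS_ge), so the
   left-hand side is at most p(E) max_{f in S} E_{p(.|E)}(f) (block_bound).
   Summing over the cells of the partition yields Val_General <= Val_Good. *)

Lemma le_bigmax_In (R : realFieldType) (T : Type) (F : T -> R) (x : R)
    (s : seq T) (h : T) :
  List.In h s -> F h <= \big[Num.max/x]_(k <- s) F k.
Proof.
elim: s => //= a s IH [<-|/IH h_le]; rewrite big_cons le_max ?lexx //.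
by rewrite h_le orbT.
Qed.

Lemma maxS_ge (R : realFieldType) (Omega : finType) (O : Type) (u : O -> R)
    (S : seq (Omega -> O)) (q : Omega -> R) (f : Omega -> O) :
  List.In f S -> expect u q f <= maxS u S q.
Proof.
case: S => [//|g s] /= [<-|f_s]; first exact: bigmax_ge_id.
exact: le_bigmax_In.
Qed.

Section ConditionalExpectation.
Variables (R : realFieldType) (Omega : finType) (p : Omega -> R).
Hypothesis p_ge0 : forall w, 0 <= p w.

Lemma prob_of_ge_mem (A : {set Omega}) (w : Omega) :
  w \in A -> p w <= prob_of p A.
Proof.
move=> wA; rewrite /prob_of (bigD1 w) //= lerDl.
by apply: sumr_ge0 => v _; exact: p_ge0.
Qed.

(* Conditional expectation is the restricted sum divided by the mass
   (with the convention x / 0 = 0 on both sides). *)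
Lemma expect_condp (O : Type) (u : O -> R) (A : {set Omega}) (f : Omega -> O) :
  expect u (condp p A) f = (\sum_(v in A) p v * u (f v)) / prob_of p A.
Proof.
rewrite /expect mulr_suml [RHS]big_mkcond /=; apply: eq_bigr => v _.
by rewrite /condp; case: (v \in A); rewrite ?mul0r // mulrAC.
Qed.

Lemma class_average (E : {set Omega}) (c : Omega -> {set Omega})
    (F : Omega -> R) :
  (forall w, w \in E -> w \in c w /\ c w \subset E) ->
  (forall w v, w \in E -> v \in c w -> c v = c w) ->
  \sum_(w in E) p w * F w =
  \sum_(w in E) p w * ((\sum_(v in c w) p v * F v) / prob_of p (c w)).
Proof.
move=> c_cls c_eq.
have c_sym w v : w \in E -> v \in E -> (v \in c w) = (w \in c v).
  move=> wE vE; apply/idP/idP => [vw|wv].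
    by rewrite (c_eq w v) //; case: (c_cls w wE).
  by rewrite (c_eq v w) //; case: (c_cls v vE).
have sum_c w : w \in E ->
    \sum_(v in c w) p v * F v = \sum_(v in E | w \in c v) p v * F v.
  move=> wE; rewrite [RHS]big_mkcond [LHS]big_mkcond; apply: eq_bigr => v _.
  case: (c_cls w wE) => _ /subsetP cE.
  by case: (boolP (v \in E)) => vE; [rewrite c_sym | rewrite (contraNF (cE v))].
under [RHS]eq_bigr => w wE do rewrite sum_c // mulr_suml mulr_sumr.
rewrite (exchange_big_dep (mem E)) /=; last by move=> w v _ /andP [].
apply: eq_bigr => v vE; rewrite vE.
have cvv : \sum_(w in E | w \in c v) p w = prob_of p (c v).
  rewrite /prob_of big_mkcond [RHS]big_mkcond; apply: eq_bigr => w _.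
  case: (c_cls v vE) => _ /subsetP cE.
  by case: (boolP (w \in E)) => wE; last rewrite (contraNF (cE w)).
under eq_bigr => w /andP [_ wv] do rewrite (c_eq v w) //.
rewrite -mulr_suml cvv.
have [mass0|mass_ne0] := eqVneq (prob_of p (c v)) 0; last by field.
have pv0 : p v = 0.
  apply/eqP; rewrite eq_le p_ge0 andbT -mass0.
  by apply: prob_of_ge_mem; case: (c_cls v vE).
by rewrite mass0 pv0 !mul0r.
Qed.

End ConditionalExpectation.

Section BlockBound.
Variables (R : realFieldType) (Omega : finType) (O : Type) (u : O -> R)
  (p : Omega -> R) (fstar : Omega -> (Omega -> O)).
Hypothesis p_ge0 : forall w, 0 <= p w.

Lemma in_Cset (E : {set Omega}) (g : Omega -> O) (w : Omega) :
  (w \in Cset fstar E g) = (w \in E) && `[< fstar w = g >].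
Proof. by rewrite inE. Qed.

Lemma chosen_utility_class_expect (E : {set Omega}) :
  \sum_(w in E) p w * u (fstar w w) =
  \sum_(w in E) p w * expect u (condp p (Cset fstar E (fstar w))) (fstar w).
Proof.
pose c w := Cset fstar E (fstar w).
have c_cls w : w \in E -> w \in c w /\ c w \subset E.
  move=> wE; split; first by rewrite in_Cset wE; exact/asboolP.
  by apply/subsetP => v; rewrite in_Cset => /andP [].
have c_eq w v : w \in E -> v \in c w -> c v = c w.
  by move=> _; rewrite in_Cset => /andP [_ /asboolP vw]; rewrite /c vw.
rewrite (class_average p_ge0 _ c_cls c_eq); apply: eq_bigr => w _.
rewrite expect_condp; congr (_ * (_ / _)); apply: eq_bigr => v.
by rewrite in_Cset => /andP [_ /asboolP ->].
Qed.

Lemma block_bound (S : seq (Omega -> O)) (E : {set Omega}) :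
  (forall w, w \in E -> List.In (fstar w) S) ->
  (forall g, List.In g S -> 0 < prob_of p (Cset fstar E g) ->
     expect u (condp p (Cset fstar E g)) g = expect u (condp p E) g) ->
  \sum_(w in E) p w * u (fstar w w) <= prob_of p E * maxS u S (condp p E).
Proof.
move=> fstar_S indep; rewrite chosen_utility_class_expect /prob_of mulr_suml.
apply: ler_sum => w wE.
have [pw0|pw_ne0] := eqVneq (p w) 0; first by rewrite pw0 !mul0r.
have pw_gt0 : 0 < p w by rewrite lt_def pw_ne0 p_ge0.
have wC : w \in Cset fstar E (fstar w) by rewrite in_Cset wE; exact/asboolP.
apply: ler_wpM2l; first exact: p_ge0.
rewrite indep; [exact/maxS_ge/fstar_S | exact: fstar_S |].
exact: lt_le_trans pw_gt0 (prob_of_ge_mem p_ge0 wC).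
Qed.
End BlockBound.

Theorem theorem3 (R : realFieldType) (Omega : finType) (O : Type) (u : O -> R)
  (p : Omega -> R) (S : seq (Omega -> O)) (P : {set {set Omega}})
  (Q : {set Omega} -> Omega -> Omega -> R)
  (fstar : Omega -> (Omega -> O)) :
  is_prob p ->
  partition P [set: Omega] ->
  (forall E, E \in P -> 0 < prob_of p E) ->
  (* update rule: P_E(w) is a probability with P_E(w)(E) = 1, for w in E *)
  (forall E w, E \in P -> w \in E -> is_prob (Q E w) /\ prob_of (Q E w) E = 1) ->
  (* standing assumption: unique maximizer of E_{P_calE(w)} over S *)
  (forall w, exists! f, List.In f S /\
     forall g, List.In g S -> expect u (Q (pblock P w) w) g <= expect u (Q (pblock P w) w) f) ->
  (* fstar w is that maximizer *)
  (forall w, List.In (fstar w) S /\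
     forall g, List.In g S -> expect u (Q (pblock P w) w) g <= expect u (Q (pblock P w) w) (fstar w)) ->
  EvidentialIndependence u S p P fstar ->
  Val_General u S p fstar <= Val_Good u S p P.
Proof.
move=> [p_ge0 _] /and3P [/eqP cover_P triv_P _] _ _ _ fstar_opt indep.
rewrite /Val_General /Val_Good lerD2r.
have split_cells F : \sum_w F w = \sum_(E in P) \sum_(w in E) F w :> R.
  by rewrite -big_trivIset // cover_P; apply: eq_bigl => w; rewrite inE.
rewrite split_cells; apply: ler_sum => E EP.
apply: block_bound => // [w _ | g g_S]; first by case: (fstar_opt w).
exact: indep.
Qed.
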